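(* Let $n,m$ be integers with $0<m<n$. Let $f_n\in\mathcal{V}_n^m$, $g_n\in\mathcal{W}_n^m$, and $f_{3n}=f_n+g_n\in\mathcal{V}_{3n}^m$, with expansions $f_n=\sum_{k=1}^na_{n,k}\tilde\varphi_{n,k}^m$, $g_n=\sum_{h=1}^{2n}b_{n,h}\tilde\psi_{n,h}^m$, $f_{3n}=\sum_{j=1}^{3n}a_{3n,j}\tilde\varphi_{3n,j}^m$, and set $\vec a_n=(a_{n,k})_{k=1}^n$, $\vec b_n=(b_{n,h})_{h=1}^{2n}$, $\vec a_{3n}=(a_{3n,j})_{j=1}^{3n}$. Define $A\in\mathbb{R}^{n\times3n}$ and $B\in\mathbb{R}^{2n\times3n}$ by $$A_{k,j}=\sum_{s=0}^{n-m}\tau_{s,k}^n\tau_{s,j}^{3n}+\sum_{s=n-m+1}^{n-1}\tau_{s,k}^n\big[\mu_{n,s}^m\tau_{s,j}^{3n}-\mu_{n,2n-s}^m\tau_{2n-s,j}^{3n}\big],$$ $$B_{h,j}=\sum_{r=n}^{n+m-1}\frac{\sigma_{r,h}^n}{\sqrt{v_{n,r}^m}}\big[\mu_{n,r}^m\tau_{2n-r,j}^{3n}+\mu_{n,2n-r}^m\tau_{r,j}^{3n}\big]+\sum_{r=n+m}^{3n-m}\frac{\sigma_{r,h}^n}{\sqrt{v_{n,r}^m}}\tau_{r,j}^{3n}+\sum_{r=3n-m+1}^{3n-1}\sigma_{r,h}^n\sqrt{v_{n,r}^m}\,\tau_{r,j}^{3n}.$$ Then $\vec a_n=A\vec a_{3n}$,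 $\vec b_n=B\vec a_{3n}$, and $\vec a_{3n}=A^T\vec a_n+B^T\vec b_n$.
   Context: Let $w(x)=(1-x^2)^{-1/2}$ on $[-1,1]$, $\langle f,g\rangle_{L^2_w}=\int_{-1}^1fgw\,dx$. Orthonormal Chebyshev polynomials: $p_0=\sqrt{1/\pi}$, $p_r(x)=\sqrt{2/\pi}\cos(r\arccos x)$, $r\ge1$. Chebyshev nodes $x_k^N=\cos\frac{(2k-1)\pi}{2N}$, $k=1,\ldots,N$; $Y_n=\{x_k^{3n}\}_{k=1}^{3n}\setminus\{x_k^n\}_{k=1}^n=\{y_k^n:k=1,\ldots,2n\}$. For $0<m<N$: $\mu_{N,r}^m=1$ if $0\le r\le N-m$, $\frac{m+N-r}{2m}$ if $N-m<r<N+m$, $0$ otherwise; for $r=0,\ldots,N-1$: $q_{N,r}^m=p_r$ if $r\le N-m$, $q_{N,r}^m=\mu_{N,r}^mp_r-\mu_{N,2N-r}^mp_{2N-r}$ if $N-m<r<N$; $\nu_{N,r}^m=1$ if $r\le N-m$, $\frac{m^2+(N-r)^2}{2m^2}$ if $N-m<r<N$; $\tau_{r,k}^N=\sqrt{\frac{\pi}{N\nu_{N,r}^m}}p_r(x_k^N)$; $\tilde\varphi_{N,k}^m=\sum_{r=0}^{N-1}\tau_{r,k}^Nq_{N,r}^m$ ($k=1,\ldots,N$), an orthonormal basis of $\mathcal{V}_N^m=\mathrm{span}\{q_{N,r}^m\}_{r=0}^{N-1}$. $\mathcal{W}_n^m$ is the orthogonal complement of $\mathcal{V}_n^m$ in $\mathcal{V}_{3n}^m$.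 For $r=n,\ldots,3n-1$: $\tilde q_{n,r}^m=\mu_{n,r}^mp_{2n-r}+\mu_{n,2n-r}^mp_r$ if $n\le r<n+m$, $p_r$ if $n+m\le r\le3n-m$, $q_{3n,r}^m$ if $3n-m<r<3n$; $v_{n,r}^m=\frac{m^2+(n-r)^2}{2m^2}$ if $n<r<n+m$, $1$ if $r=n$ or $n+m\le r\le3n-m$, $\frac{m^2+(3n-r)^2}{2m^2}$ if $3n-m<r<3n$. For $k=1,\ldots,2n$: $\sigma_{r,k}^n=\sqrt{\frac{\pi}{3n}}\,c_{r,k}$ with $c_{r,k}=p_n(y_k^n)$ if $r=n$, $\frac{p_r(y_k^n)+p_{2n-r}(y_k^n)}{\sqrt2}$ if $n<r<2n$, $\frac{p_{2n}(y_k^n)+\sqrt2p_0(y_k^n)}{\sqrt3}$ if $r=2n$, $\sqrt{3/2}\,p_r(y_k^n)$ if $2n<r<3n$. Orthonormal VP wavelets: $\tilde\psi_{n,k}^m=\sum_{r=n}^{3n-1}\sigma_{r,k}^n\tilde q_{n,r}^m/\sqrt{v_{n,r}^m}$, $k=1,\ldots,2n$, an orthonormal basis of $\mathcal{W}_n^m$. *)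

From HB Require Import structures.
From mathcomp Require Import all_boot all_order all_algebra.
From mathcomp Require Import all_classical all_reals all_analysis.
Set Implicit Arguments. Unset Strict Implicit. Unset Printing Implicit Defensive.
Import Order.TTheory GRing.Theory Num.Theory.
Local Open Scope ring_scope.

Section VP.
Variable R : realType.

Definition cheb (r : nat) (x : R) : R :=
  if r == 0%N then Num.sqrt (1 / pi) else Num.sqrt (2 / pi) * cos (r%:R * acos x).

Definition node (N k : nat) : R := cos (((2 * k - 1)%N%:R * pi) / (2 * N)%N%:R).

Definition inY (n : nat) (x : R) : Prop :=
  (exists k, (1 <= k <= 3 * n)%N /\ x = node (3 * n) k) /\
  (forall j, (1 <= j <= n)%N -> x <> node n j).

(* y : {1..2n} -> R is an enumeration y_k^n (k = 1..2n) of Y_n *)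
Definition Yenum (n : nat) (y : nat -> R) : Prop :=
  (forall k, (1 <= k <= 2 * n)%N -> inY n (y k)) /\
  (forall k l, (1 <= k <= 2 * n)%N -> (1 <= l <= 2 * n)%N -> y k = y l -> k = l).

Definition mu (N m r : nat) : R :=
  if (r <= N - m)%N then 1
  else if (r < N + m)%N then (m%:R + N%:R - r%:R) / (2 * m%:R) else 0.

Definition q (N m r : nat) (x : R) : R :=
  if (r <= N - m)%N then cheb r x
  else mu N m r * cheb r x - mu N m (2 * N - r) * cheb (2 * N - r) x.

Definition nu (N m r : nat) : R :=
  if (r <= N - m)%N then 1
  else (m%:R ^+ 2 + (N%:R - r%:R) ^+ 2) / (2 * m%:R ^+ 2).

(* tau_{r,k}^N (depends on m through nu) *)
Definition tau (N m r k : nat) : R :=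
  Num.sqrt (pi / (N%:R * nu N m r)) * cheb r (node N k).

Definition phi (N m k : nat) (x : R) : R :=
  \sum_(0 <= r < N) tau N m r k * q N m r x.

Definition qt (n m r : nat) (x : R) : R :=
  if (r < n + m)%N then mu n m r * cheb (2 * n - r) x + mu n m (2 * n - r) * cheb r x
  else if (r <= 3 * n - m)%N then cheb r x
  else q (3 * n) m r x.

Definition v (n m r : nat) : R :=
  if (n < r < n + m)%N then (m%:R ^+ 2 + (n%:R - r%:R) ^+ 2) / (2 * m%:R ^+ 2)
  else if (r == n) || (n + m <= r <= 3 * n - m)%N then 1
  else (m%:R ^+ 2 + ((3 * n)%N%:R - r%:R) ^+ 2) / (2 * m%:R ^+ 2).

Definition cc (n : nat) (y : nat -> R) (r k : nat) : R :=
  if r == n then cheb n (y k)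
  else if (r < 2 * n)%N then (cheb r (y k) + cheb (2 * n - r) (y k)) / Num.sqrt 2
  else if r == (2 * n)%N then
    (cheb (2 * n) (y k) + Num.sqrt 2 * cheb 0 (y k)) / Num.sqrt 3
  else Num.sqrt (3 / 2) * cheb r (y k).

Definition sigma (n : nat) (y : nat -> R) (r k : nat) : R :=
  Num.sqrt (pi / (3 * n)%N%:R) * cc n y r k.

Definition psi (n m : nat) (y : nat -> R) (k : nat) (x : R) : R :=
  \sum_(n <= r < 3 * n) sigma n y r k * qt n m r x / Num.sqrt (v n m r).

Definition Aent (n m k j : nat) : R :=
  \sum_(0 <= s < n - m + 1) tau n m s k * tau (3 * n) m s j
  + \sum_(n - m + 1 <= s < n)
      tau n m s k * (mu n m s * tau (3 * n) m s j
                     - mu n m (2 * n - s) * tau (3 * n) m (2 * n - s) j).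

Definition Bent (n m : nat) (y : nat -> R) (h j : nat) : R :=
  \sum_(n <= r < n + m) sigma n y r h / Num.sqrt (v n m r) *
      (mu n m r * tau (3 * n) m (2 * n - r) j + mu n m (2 * n - r) * tau (3 * n) m r j)
  + \sum_(n + m <= r < 3 * n - m + 1) sigma n y r h / Num.sqrt (v n m r) * tau (3 * n) m r j
  + \sum_(3 * n - m + 1 <= r < 3 * n) sigma n y r h * Num.sqrt (v n m r) * tau (3 * n) m r j.

(* matrices with 0-based ordinal indices: row i <-> k = i+1 *)
Definition Amat (n m : nat) : 'M[R]_(n, 3 * n) :=
  \matrix_(k < n, j < 3 * n) Aent n m k.+1 j.+1.
Definition Bmat (n m : nat) (y : nat -> R) : 'M[R]_(2 * n, 3 * n) :=
  \matrix_(h < 2 * n, j < 3 * n) Bent n m y h.+1 j.+1.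

End VP.

Arguments cheb {R}. Arguments node {R}. Arguments inY {R}. Arguments Yenum {R}.
Arguments mu {R}. Arguments q {R}. Arguments nu {R}. Arguments tau {R}.
Arguments phi {R}. Arguments qt {R}. Arguments v {R}. Arguments cc {R}.
Arguments sigma {R}. Arguments psi {R}. Arguments Aent {R}. Arguments Bent {R}.
Arguments Amat {R}. Arguments Bmat {R}.

(* Every function involved is a Chebyshev sum of degree < 4n, and on such sums the
   Gauss-Chebyshev quadrature with 4n nodes is exact, so all inner products become finite
   sums over nodes.  In these terms phi_(N,k) and psi_(n,h) are orthonormal, psi_(n,h) is
   orthogonal to V_n, A_(k,j) = <phi_(n,k), phi_(3n,j)> and B_(h,j) = <phi_(3n,j), psi_(n,h)>;
   the three identities then just read off coefficients of orthonormal expansions.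
   Orthonormality of psi reduces to that of the rows of (sigma_(r,h)): summing over
   Y_n = (nodes of order 3n) \ (nodes of order n), the sum over the coarse nodes collapses
   because at x_k^n, with theta = (2k-1)pi/2n, cos(n theta) = 0 and cos(2n theta) = -1, so
   p_(n+d) = -p_(n-d) and p_(2n+d) = -p_d there. *)

From HB Require Import structures.
From mathcomp Require Import all_boot all_order all_algebra.
From mathcomp Require Import all_classical all_reals all_analysis.
From mathcomp Require Import zify ring lra.
Import Order.TTheory GRing.Theory Num.Theory.
Local Open Scope ring_scope.

Ltac case_ifs := repeat (case: ifP => ?; try (exfalso; lia)).

Ltac decide_nat_eqs :=
  repeat match goal with
  | |- context [@eq_op _ ?a ?b] =>
    first [ rewrite (_ : (a == b) = true); last by apply/eqP; lia
          | rewrite (_ : (a == b) = false); last by apply/eqP; lia ]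
  end; rewrite /= ?mulr1n ?mulr0n.

Lemma orthonormal_rows_cols (R : comUnitRingType) N (F : 'I_N -> 'I_N -> R) :
  (forall i j, \sum_t F i t * F j t = (i == j)%:R) ->
  forall k l, \sum_i F i k * F i l = (k == l)%:R.
Proof.
move=> rows k l; pose U := \matrix_(i, j) F i j.
have UUt : U *m U^T = 1%:M.
  apply/matrixP => i j; rewrite !mxE -rows.
  by apply: eq_bigr => t _; rewrite !mxE.
have /matrixP/(_ k l) := mulmx1C UUt; rewrite !mxE => <-.
by apply: eq_bigr => i _; rewrite !mxE.
Qed.

Arguments orthonormal_rows_cols {R N F}.

Lemma sum_nat_delta (R : nzSemiRingType) lo hi a (F : nat -> R) : (lo <= a < hi)%N ->
  \sum_(lo <= i < hi) F i * (a == i)%:R = F a.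
Proof.
move=> a_in; rewrite (bigD1_seq a) ?mem_index_iota ?iota_uniq //= eqxx mulr1.
by rewrite big1 ?addr0 // => i /negbTE; rewrite eq_sym => ->; rewrite mulr0.
Qed.

Lemma sum_nat_mul3 (V : nmodType) (F : nat -> V) n :
  \sum_(0 <= k < 3 * n) F k = \sum_(0 <= j < n) (F (3 * j)%N + F (3 * j + 1)%N + F (3 * j + 2)%N).
Proof.
elim: n => [|n IH]; first by rewrite muln0 !big_geq.
rewrite (_ : (3 * n.+1 = (3 * n).+2.+1)%N); last lia.
rewrite !big_nat_recr //= IH -!addrA; congr (_ + _).
by rewrite addn1 (_ : (3 * n + 2 = (3 * n).+2)%N) //; lia.
Qed.

Lemma card_ord_mod3_eq1 n : #|[set k : 'I_(3 * n) | (k %% 3 == 1)%N]| = n.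
Proof.
rewrite -sum1_card (eq_bigl (fun k : 'I_(3 * n) => (k %% 3 == 1)%N)) => [|k]; last by rewrite inE.
rewrite big_mkcond /= -(big_mkord xpredT (fun k => if (k %% 3 == 1)%N then 1 else 0)%N).
rewrite sum_nat_mul3 (eq_big_nat _ _ (F2 := fun=> 1%N)) => [|j _]; last by decide_nat_eqs.
by rewrite sum_nat_const_nat subn0 muln1.
Qed.

Section DiscreteOrthogonality.
Context {R : realType}.

Lemma sin_nat_mulpi j : sin (j%:R * pi) = 0 :> R.
Proof.
elim: j => [|j IH]; first by rewrite mul0r sin0.
by rewrite -natr1 mulrDl mul1r sinDpi IH oppr0.
Qed.

Lemma cos_nat_mulpi j : cos (j%:R * pi) = (-1) ^+ j :> R.
Proof.
elim: j => [|j IH]; first by rewrite mul0r cos0 expr0.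
by rewrite -natr1 mulrDl mul1r cosDpi IH exprS mulN1r.
Qed.

Definition node_angle (M k : nat) : R := (2 * k + 1)%N%:R * pi / (2 * M)%N%:R.

Lemma nodeE M k : node M k.+1 = cos (node_angle M k).
Proof. by rewrite /node /node_angle; congr (cos (_%:R * _ / _)); lia. Qed.

Lemma node_angle_itv M k : (k < M)%N -> 0 <= node_angle M k <= pi.
Proof.
move=> kM; have M0 : 0 < (2 * M)%N%:R :> R by rewrite ltr0n; lia.
rewrite divr_ge0 ?mulr_ge0 ?pi_ge0 //=.
by rewrite ler_pdivrMr // mulrC ler_pM2l ?pi_gt0 // ler_nat; lia.
Qed.

(* For [0 < j < 2M], multiplying by [2 sin a] with [a = j pi / 2M] telescopes the sum. *)
Lemma sum_cos_node_angle M j : (j < 2 * M)%N ->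
  \sum_(k < M) cos (j%:R * node_angle M k) = (j == 0)%N%:R * M%:R.
Proof.
move=> jM; have [->|j0] := eqVneq j 0%N.
  by rewrite (eq_bigr (fun=> 1)) => [|k _]; rewrite ?mul0r ?cos0 // sumr_const card_ord mul1r.
rewrite mul0r; have M0 : M%:R != 0 :> R by rewrite pnatr_eq0; lia.
set a : R := j%:R * pi / (2 * M)%N%:R.
have a_gt0 : 0 < a.
  by rewrite /a divr_gt0 // ?mulr_gt0 ?pi_gt0 ?ltr0n //; lia.
have a_ltpi : a < pi.
  rewrite /a ltr_pdivrMr ?ltr0n; last lia.
  by rewrite mulrC ltr_pM2l ?pi_gt0 // ltr_nat.
have sin_a : sin a *+ 2 != 0 by rewrite mulrn_eq0 /= gt_eqF // sin_gt0_pi ?a_gt0.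
have telescope k : sin a *+ 2 * cos (j%:R * node_angle M k) =
    sin ((k.+1 * 2)%N%:R * a) - sin ((k * 2)%N%:R * a).
  have -> : j%:R * node_angle M k = (2 * k + 1)%N%:R * a by rewrite /node_angle /a; ring.
  rewrite (_ : (k.+1 * 2)%N%:R * a = (2 * k + 1)%N%:R * a + a); last first.
    by rewrite !natrD !natrM -!natr1; ring.
  rewrite (_ : (k * 2)%N%:R * a = (2 * k + 1)%N%:R * a - a); last first.
    by rewrite !natrD !natrM; ring.
  by rewrite sinD sinB; ring.
apply: (mulfI sin_a); rewrite mulr0 mulr_sumr (eq_bigr _ (fun (k : 'I_M) _ => telescope k)).
rewrite -(big_mkord xpredT (fun k => sin ((k.+1 * 2)%N%:R * a) - sin ((k * 2)%N%:R * a))).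
rewrite telescope_sumr // mul0r sin0 subr0.
rewrite (_ : (M * 2)%N%:R * a = j%:R * pi); last by rewrite /a !natrM; field.
exact: sin_nat_mulpi.
Qed.

Lemma sum_cos_mul_node_angle M a b : (a < M)%N -> (b < M)%N ->
  \sum_(k < M) cos (a%:R * node_angle M k) * cos (b%:R * node_angle M k)
  = ((a + b == 0)%N%:R + (a == b)%:R) * M%:R / 2.
Proof.
move=> aM bM.
have cos_dist t : cos ((a%:R - b%:R) * t) = cos (`|a - b|%N%:R * t) :> R.
  case: (leqP a b) => ab; last by rewrite distnEl 1?ltnW // natrB 1?ltnW.
  by rewrite distnEr // natrB // -cosN -mulNr opprB.
have dist_lt : (`|a - b| < 2 * M)%N.
  by case: (leqP a b) => ab; [rewrite distnEr|rewrite distnEl 1?ltnW]; lia.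
rewrite -[a == b]distn_eq0 mulrDl !mulrDl -!sum_cos_node_angle //; last lia.
rewrite !mulr_suml -big_split /=; apply: eq_bigr => k _.
by rewrite natrD -cos_dist mulrBl mulrDl cosD cosB; field.
Qed.

Definition cheb_norm (r : nat) : R := Num.sqrt ((if r == 0%N then 1 else 2) / pi).

Lemma cheb_cos r t : 0 <= t <= pi -> cheb r (cos t) = cheb_norm r * cos (r%:R * t).
Proof.
move=> t_itv; rewrite /cheb /cheb_norm cosK ?in_itv //.
by case: eqP => [->|]; rewrite ?mul0r ?cos0 ?mulr1.
Qed.

Lemma cheb_norm_sqr r : cheb_norm r ^+ 2 = (if r == 0%N then 1 else 2) / pi.
Proof. by rewrite sqr_sqrtr // divr_ge0 ?pi_ge0 //; case: eqP. Qed.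

Lemma cheb_discrete_orth M a b : (a < M)%N -> (b < M)%N ->
  \sum_(k < M) cheb a (node M k.+1) * cheb b (node M k.+1) = (a == b)%:R * (M%:R / pi) :> R.
Proof.
move=> aM bM.
rewrite (eq_bigr (fun k : 'I_M => cheb_norm a * cheb_norm b *
  (cos (a%:R * node_angle M k) * cos (b%:R * node_angle M k)))); last first.
  by move=> k _; rewrite nodeE !cheb_cos ?node_angle_itv //; ring.
rewrite -mulr_sumr sum_cos_mul_node_angle //.
have pi0 : pi != 0 :> R by rewrite gt_eqF ?pi_gt0.
have [<-|ab] := eqVneq a b; last first.
  have -> : (a + b == 0)%N = false by apply/eqP; move/eqP: ab; lia.
  by rewrite addr0 !mul0r mulr0.
rewrite -mulrA mulrA -expr2 cheb_norm_sqr.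
(* [field] would unfold [pi], so it is generalized first. *)
move: pi0; generalize (@pi R) => p p0.
have [->|a0] := eqVneq a 0%N; first by rewrite /=; field.
have -> : (a + a == 0)%N = false by apply/eqP; lia.
by rewrite /=; field.
Qed.

Lemma cheb_discrete_orth_dual N k l : (k < N)%N -> (l < N)%N ->
  \sum_(r < N) cheb r (node N k.+1) * cheb r (node N l.+1) = (k == l)%:R * (N%:R / pi) :> R.
Proof.
move=> kN lN.
have pi0 : 0 < pi :> R := pi_gt0 R.
have N0 : 0 < N%:R :> R by rewrite ltr0n; lia.
set c : R := Num.sqrt (pi / N%:R).
have c2 : c * c = pi / N%:R by rewrite -expr2 sqr_sqrtr // divr_ge0 // ltW.
pose F (r t : 'I_N) := c * cheb r (node N t.+1).
have FF : forall r s, \sum_t F r t * F s t = (r == s)%:R.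
  move=> r s.
  rewrite (eq_bigr (fun t : 'I_N => c * c * (cheb r (node N t.+1) * cheb s (node N t.+1)))).
    rewrite -mulr_sumr cheb_discrete_orth // c2.
    by move: pi0; generalize (@pi R) => p p0; field; rewrite !gt_eqF.
  by move=> t _; rewrite /F; ring.
have := orthonormal_rows_cols FF (Ordinal kN) (Ordinal lN).
rewrite (eq_bigr (fun r : 'I_N => c * c * (cheb r (node N k.+1) * cheb r (node N l.+1)))).
  rewrite -mulr_sumr c2 /= => <-.
  by move: pi0; generalize (@pi R) => p p0; field; rewrite !gt_eqF.
by move=> r _; rewrite /F; ring.
Qed.

End DiscreteOrthogonality.

Section ChebyshevAtCoarseNodes.
Context {R : realType}.
Context {n k : nat}.
Hypothesis kn : (k < n)%N.

Let theta : R := node_angle n k.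

Lemma cos_node_angle_mul : cos (n%:R * theta) = 0.
Proof.
have n0 : n%:R != 0 :> R by rewrite pnatr_eq0; lia.
rewrite (_ : n%:R * theta = k%:R * pi + pi / 2) ?cosDpihalf ?sin_nat_mulpi ?oppr0 //.
by rewrite /theta /node_angle (natrD _ (2 * k) 1) !natrM; field.
Qed.

Lemma node_angle_mul_double : (2 * n)%N%:R * theta = (2 * k + 1)%N%:R * pi.
Proof.
have n0 : n%:R != 0 :> R by rewrite pnatr_eq0; lia.
by rewrite /theta /node_angle (natrD _ (2 * k) 1) !natrM; field.
Qed.

Lemma cos_node_angle_mul_double : cos ((2 * n)%N%:R * theta) = -1.
Proof. by rewrite node_angle_mul_double cos_nat_mulpi -signr_odd oddD oddM. Qed.

Lemma sin_node_angle_mul_double : sin ((2 * n)%N%:R * theta) = 0.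
Proof. by rewrite node_angle_mul_double sin_nat_mulpi. Qed.

Let x : R := node n k.+1.

Lemma cheb_coarse_node_mid : cheb n x = 0.
Proof. by rewrite /x nodeE cheb_cos ?node_angle_itv // cos_node_angle_mul mulr0. Qed.

Lemma cheb_coarse_node_add_sub d : (d < n)%N -> cheb (n + d) x + cheb (n - d) x = 0.
Proof.
move=> dn; rewrite /x nodeE !cheb_cos ?node_angle_itv // /cheb_norm.
have -> : (n + d == 0)%N = false by apply/eqP; lia.
have -> : (n - d == 0)%N = false by apply/eqP; lia.
rewrite -mulrDr natrD natrB 1?ltnW // [(n%:R + _) * _]mulrDl mulrBl cosD cosB.
by rewrite -/theta cos_node_angle_mul !mul0r !add0r addNr mulr0.
Qed.

Lemma cheb_coarse_node_double : cheb (2 * n) x = - (Num.sqrt 2 * cheb 0 x).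
Proof.
rewrite /x nodeE !cheb_cos ?node_angle_itv // /cheb_norm -/theta cos_node_angle_mul_double.
have -> : (2 * n == 0)%N = false by apply/eqP; lia.
by rewrite mul0r cos0 mulr1 -sqrtrM ?ler0n // mul1r mulrN1.
Qed.

Lemma cheb_coarse_node_shift d : (0 < d)%N -> cheb (2 * n + d) x = - cheb d x.
Proof.
move=> d0; rewrite /x nodeE !cheb_cos ?node_angle_itv // /cheb_norm -/theta.
have -> : (2 * n + d == 0)%N = false by apply/eqP; lia.
have -> : (d == 0)%N = false by apply/eqP; lia.
rewrite natrD [(_ + d%:R) * _]mulrDl cosD cos_node_angle_mul_double sin_node_angle_mul_double.
by rewrite mul0r subr0 mulN1r mulrN.
Qed.

End ChebyshevAtCoarseNodes.

Section NestedNodes.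
Context {R : realType}.
Context {n : nat}.
Hypothesis n0 : (0 < n)%N.

Lemma node_angle_mul3 j : node_angle (3 * n) (3 * j + 1) = node_angle n j :> R.
Proof.
have n0' : n%:R != 0 :> R by rewrite pnatr_eq0; lia.
rewrite /node_angle (_ : (2 * (3 * j + 1) + 1 = 3 * (2 * j + 1))%N); last lia.
by rewrite (_ : (2 * (3 * n) = 3 * (2 * n))%N) ?natrM; [field|lia].
Qed.

Lemma sum_fine_nodes_mod3 (F : R -> R) :
  \sum_(k < 3 * n | (k %% 3 == 1)%N) F (node (3 * n) k.+1) = \sum_(j < n) F (node n j.+1).
Proof.
rewrite big_mkcond /=.
rewrite -(big_mkord xpredT (fun k => if (k %% 3 == 1)%N then F (node (3 * n) k.+1) else 0)).
rewrite sum_nat_mul3 -(big_mkord xpredT (fun j => F (node n j.+1))).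
apply: eq_big_nat => j _; decide_nat_eqs.
by rewrite add0r addr0 !nodeE node_angle_mul3.
Qed.

(* [y] enumerates the fine nodes [x_(k+1)^(3n)] with [k mod 3 <> 1];
   the others are the coarse nodes. *)
Lemma sum_Yenum (y : nat -> R) (F : R -> R) : Yenum n y ->
  \sum_(h < 2 * n) F (y h.+1) =
  \sum_(k < 3 * n) F (node (3 * n) k.+1) - \sum_(j < n) F (node n j.+1).
Proof.
move=> [y_in y_inj]; pose K := [set k : 'I_(3 * n) | (k %% 3 == 1)%N].
have y_fine (h : 'I_(2 * n)) : exists k : 'I_(3 * n), y h.+1 = node (3 * n) k.+1.
  have [[k [k_itv ->]] _] := y_in h.+1 (ltac:(have := ltn_ord h; lia)).
  by exists (Ordinal (ltac:(lia) : (k.-1 < 3 * n)%N)) => /=; congr node; lia.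
have [ka kaE] := boolp.choice y_fine.
have ka_inj : injective ka.
  move=> h1 h2 e; apply/ord_inj/eq_add_S/y_inj; rewrite ?kaE ?e //.
    by have := ltn_ord h1; lia.
  by have := ltn_ord h2; lia.
have kaK h : ka h \notin K.
  rewrite inE; apply/negP => /eqP ka1.
  have [_ not_coarse] := y_in h.+1 (ltac:(have := ltn_ord h; lia)).
  apply: (not_coarse (ka h %/ 3).+1); first by have := ltn_ord (ka h); lia.
  by rewrite kaE !nodeE -node_angle_mul3; congr (cos (node_angle _ _)); lia.
have imK : ka @: [set: 'I_(2 * n)] = ~: K.
  apply/eqP; rewrite eqEcard card_imset // cardsT card_ord; apply/andP; split.
    by apply/fintype.subsetP => _ /imsetP[h _ ->]; rewrite inE; exact: kaK.
  by rewrite -(leq_add2l #|K|) cardsC card_ord card_ord_mod3_eq1; lia.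
rewrite (eq_bigr (fun h => F (node (3 * n) (ka h).+1))) => [|h _]; last by rewrite kaE.
rewrite (eq_bigl (fun h => h \in [set: 'I_(2 * n)])) => [|h]; last by rewrite inE.
rewrite -(big_imset (fun k : 'I_(3 * n) => F (node (3 * n) k.+1))) => [|h1 h2 _ _];
  last exact: ka_inj.
rewrite imK (bigID (mem K) xpredT) /= -sum_fine_nodes_mod3.
rewrite [X in _ - X](eq_bigl (fun k => k \in K)) => [|k]; last by rewrite inE.
by rewrite addrAC subrr add0r; apply: eq_bigl => k; rewrite !inE.
Qed.

End NestedNodes.

Section NodeInnerProduct.
Context {R : realType}.
Implicit Types (f g : R -> R) (L : seq (nat * R)).

(* The Gauss-Chebyshev quadrature of [\int f g w] with [M] nodes; by [cheb_discrete_orth]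
   it is exact when [f] and [g] are Chebyshev sums of degree [< M]. *)
Definition node_dot M f g : R :=
  pi / M%:R * \sum_(k < M) f (node M k.+1) * g (node M k.+1).

Lemma node_dotC M f g : node_dot M f g = node_dot M g f.
Proof. by congr (_ * _); apply: eq_bigr => k _; rewrite mulrC. Qed.

Lemma node_dot_eq_on M f g g' : (forall x, -1 <= x <= 1 -> g x = g' x) ->
  node_dot M f g = node_dot M f g'.
Proof.
move=> gg'; congr (_ * _); apply: eq_bigr => k _.
by rewrite gg' // /node cos_geN1 cos_le1.
Qed.

Lemma node_dotDr M f g g' :
  node_dot M f (fun x => g x + g' x) = node_dot M f g + node_dot M f g'.
Proof. by rewrite -mulrDr -big_split; congr (_ * _); apply: eq_bigr => k _; rewrite mulrDr. Qed.

Lemma node_dot_sumr M (I : Type) (s : seq I) (c : I -> R) (F : I -> R -> R) f :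
  node_dot M f (fun x => \sum_(i <- s) c i * F i x) = \sum_(i <- s) c i * node_dot M f (F i).
Proof.
rewrite /node_dot (eq_bigr (fun k : 'I_M =>
  \sum_(i <- s) c i * (f (node M k.+1) * F i (node M k.+1)))).
  by rewrite exchange_big mulr_sumr; apply: eq_bigr => i _; rewrite -mulr_sumr mulrCA.
by move=> k _; rewrite mulr_sumr; apply: eq_bigr => i _; rewrite mulrCA.
Qed.

Lemma node_dot_suml M (I : Type) (s : seq I) (c : I -> R) (F : I -> R -> R) f :
  node_dot M (fun x => \sum_(i <- s) c i * F i x) f = \sum_(i <- s) c i * node_dot M (F i) f.
Proof. by rewrite node_dotC node_dot_sumr; apply: eq_bigr => i _; rewrite node_dotC. Qed.

Lemma node_dot_cheb M a b : (a < M)%N -> (b < M)%N ->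
  node_dot M (cheb a) (cheb b) = (a == b)%:R.
Proof.
move=> aM bM; rewrite /node_dot cheb_discrete_orth //.
have M0 : M%:R != 0 :> R by rewrite pnatr_eq0; lia.
by move: (pi_gt0 R); generalize (@pi R) => p p0; field; rewrite gt_eqF.
Qed.

Definition chebsum L x : R := \sum_(p <- L) p.2 * cheb p.1 x.

Definition coef_dot L L' : R :=
  \sum_(p <- L) \sum_(p' <- L') p.2 * p'.2 * (p.1 == p'.1)%:R.

Lemma coef_dotC L L' : coef_dot L L' = coef_dot L' L.
Proof.
rewrite /coef_dot exchange_big; apply: eq_bigr => p _; apply: eq_bigr => p' _.
by rewrite eq_sym [_.2 * _]mulrC.
Qed.

Lemma coef_dot_cat2 a w b w' L :
  coef_dot [:: (a, w); (b, w')] L = coef_dot [:: (a, w)] L + coef_dot [:: (b, w')] L.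
Proof. by rewrite /coef_dot !big_cons !big_nil !addr0. Qed.

Lemma node_dot_chebsum M L L' :
  all (fun p => p.1 < M)%N L -> all (fun p => p.1 < M)%N L' ->
  node_dot M (chebsum L) (chebsum L') = coef_dot L L'.
Proof.
move=> /allP LM /allP L'M.
rewrite node_dot_suml /coef_dot big_seq [RHS]big_seq; apply: eq_bigr => p pL.
rewrite node_dot_sumr mulr_sumr big_seq [RHS]big_seq; apply: eq_bigr => p' pL'.
by rewrite node_dot_cheb ?(LM p) ?(L'M p') // mulrA.
Qed.

Lemma node_dot_expansion M N (e : 'I_N -> R -> R) (c : 'I_N -> R) f g :
  (forall x, -1 <= x <= 1 -> g x = \sum_(i < N) c i * e i x) ->
  node_dot M f g = \sum_(i < N) c i * node_dot M f (e i).
Proof. by move/node_dot_eq_on => ->; rewrite node_dot_sumr. Qed.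

Lemma node_dot_orthonormal_coef M N (e : 'I_N -> R -> R) (c : 'I_N -> R) g i :
  (forall i j, node_dot M (e i) (e j) = (i == j)%:R) ->
  (forall x, -1 <= x <= 1 -> g x = \sum_(i < N) c i * e i x) ->
  node_dot M (e i) g = c i.
Proof.
move=> orth /node_dot_expansion ->; rewrite (bigD1 i) //= orth eqxx mulr1.
by rewrite big1 ?addr0 // => j ji; rewrite orth eq_sym (negbTE ji) mulr0.
Qed.

End NodeInnerProduct.

Arguments node_dot_eq_on {R M f g g'}.
Arguments node_dot_expansion {R M N e c f g}.
Arguments node_dot_orthonormal_coef {R M N e c g}.

Ltac expand_coef_dot := rewrite /coef_dot !big_cons !big_nil /=; decide_nat_eqs.

Section ChebyshevCoefficients.
Context {R : realType}.

Definition q_coefs N m r : seq (nat * R) :=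
  if (r <= N - m)%N then [:: (r, 1)]
  else [:: (r, mu N m r); ((2 * N - r)%N, - mu N m (2 * N - r))].

Definition qt_coefs n m r : seq (nat * R) :=
  if (r < n + m)%N then [:: ((2 * n - r)%N, mu n m r); (r, mu n m (2 * n - r))]
  else if (r <= 3 * n - m)%N then [:: (r, 1)] else q_coefs (3 * n) m r.

Lemma q_chebsum N m r : q N m r = chebsum (q_coefs N m r).
Proof.
by apply: funext => x; rewrite /q /q_coefs /chebsum; case: ifP => _;
  rewrite !big_cons big_nil /=; ring.
Qed.

Lemma qt_chebsum n m r : qt n m r = chebsum (qt_coefs n m r).
Proof.
apply: funext => x; rewrite /qt /qt_coefs; case: ifP => _.
  by rewrite /chebsum !big_cons big_nil /=; ring.
case: ifP => _; last by rewrite q_chebsum.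
by rewrite /chebsum !big_cons big_nil /=; ring.
Qed.

Lemma q_coefs_lt N m r M : (r < N)%N -> (N + m <= M)%N ->
  all (fun p => p.1 < M)%N (q_coefs N m r).
Proof. by move=> rN NM; rewrite /q_coefs; case: ifP => /= r_lo; rewrite ?andbT; lia. Qed.

Lemma qt_coefs_lt n m r : (m < n)%N -> (n <= r < 3 * n)%N ->
  all (fun p => p.1 < 4 * n)%N (qt_coefs n m r).
Proof.
move=> mn rn; rewrite /qt_coefs; case: ifP => /= r_lo; first by rewrite andbT; lia.
by case: ifP => /= r_mid; [rewrite andbT; lia|apply: q_coefs_lt; lia].
Qed.

Lemma mu_sqr_add N m r : (0 < m)%N -> (N - m < r < N)%N ->
  mu N m r ^+ 2 + mu N m (2 * N - r) ^+ 2 = nu N m r :> R.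
Proof.
move=> m0 rN; have m0' : m%:R != 0 :> R by rewrite pnatr_eq0; lia.
rewrite /mu /nu; case_ifs.
by rewrite natrB ?natrM; [field|lia].
Qed.

Lemma mu_sqr_add_v n m r : (0 < m < n)%N -> (n < r < n + m)%N ->
  mu n m r ^+ 2 + mu n m (2 * n - r) ^+ 2 = v n m r :> R.
Proof.
move=> /andP[m0 mn] rn; have m0' : m%:R != 0 :> R by rewrite pnatr_eq0; lia.
by rewrite /mu /v; case_ifs; rewrite natrB ?natrM; [field|lia].
Qed.

Lemma v_nu3 n m r : (0 < m < n)%N -> (3 * n - m < r < 3 * n)%N ->
  v n m r = nu (3 * n) m r :> R.
Proof. by move=> /andP[m0 mn] rn; rewrite /nu /v; case_ifs. Qed.

Lemma mu_half n m : (0 < m < n)%N -> mu n m n = 1 / 2 :> R.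
Proof.
move=> /andP[m0 mn]; have m0' : m%:R != 0 :> R by rewrite pnatr_eq0; lia.
by rewrite /mu; case_ifs; field.
Qed.

Lemma sqr_frac_gt0 m (d : R) : (0 < m)%N -> 0 < (m%:R ^+ 2 + d ^+ 2) / (2 * m%:R ^+ 2).
Proof.
move=> m0; have m2 : 0 < m%:R ^+ 2 :> R by rewrite exprn_gt0 // ltr0n.
by have d2 := sqr_ge0 d; apply: divr_gt0; lra.
Qed.

Lemma nu_gt0 N m r : (0 < m)%N -> 0 < nu N m r :> R.
Proof. by move=> m0; rewrite /nu; case: ifP => _; rewrite ?ltr01 ?sqr_frac_gt0. Qed.

Lemma v_gt0 n m r : (0 < m)%N -> 0 < v n m r :> R.
Proof.
by move=> m0; rewrite /v; case: ifP => _; [|case: ifP => _]; rewrite ?ltr01 ?sqr_frac_gt0.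
Qed.

Lemma coef_dot_q N m r s : (0 < m < N)%N -> (r < N)%N -> (s < N)%N ->
  coef_dot (q_coefs N m r) (q_coefs N m s) = (r == s)%:R * nu N m r.
Proof.
move=> /andP[m0 mN] rN sN; have [<-|rs] := eqVneq r s.
  rewrite /q_coefs; case: ifP => r_lo; expand_coef_dot; first by rewrite /nu r_lo; ring.
  by rewrite -mu_sqr_add //; [ring|lia].
move/eqP: rs => rs; rewrite /q_coefs; case_ifs; expand_coef_dot; ring.
Qed.

Lemma coef_dot_q_qt n m s r : (0 < m < n)%N -> (s < n)%N -> (n <= r < 3 * n)%N ->
  coef_dot (q_coefs n m s) (qt_coefs n m r) = 0.
Proof.
move=> /andP[m0 mn] sn rn; have [rs|/eqP rs] := eqVneq r (2 * n - s)%N.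
  rewrite /qt_coefs /q_coefs; case_ifs; expand_coef_dot; try ring.
  by rewrite (_ : (2 * n - r)%N = s) ?rs; [ring|lia].
by rewrite /qt_coefs /q_coefs; case_ifs; expand_coef_dot; ring.
Qed.

Lemma coef_dot_qt n m r s : (0 < m < n)%N -> (n <= r < 3 * n)%N -> (n <= s < 3 * n)%N ->
  coef_dot (qt_coefs n m r) (qt_coefs n m s) = (r == s)%:R * v n m r.
Proof.
move=> hm rn sn; have /andP[m0 mn] := hm.
have [<-|/eqP rs] := eqVneq r s; last first.
  by rewrite /qt_coefs /q_coefs; case_ifs; expand_coef_dot; ring.
have [->|/eqP r_n] := eqVneq r n.
  rewrite /qt_coefs; case_ifs; expand_coef_dot.
  by rewrite (_ : (2 * n - n)%N = n) ?mu_half // /v; [case_ifs; field|lia].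
rewrite /qt_coefs /q_coefs; case_ifs; expand_coef_dot.
- by rewrite -mu_sqr_add_v //; [ring|lia].
- by rewrite /v; case_ifs; ring.
- by rewrite v_nu3 -?mu_sqr_add //; [ring|lia|lia].
Qed.

End ChebyshevCoefficients.

Section WaveletInnerProducts.
Context {R : realType}.

Lemma psiE n m (y : nat -> R) h :
  psi n m y h = fun x => \sum_(n <= r < 3 * n) sigma n y r h / Num.sqrt (v n m r) * qt n m r x.
Proof. by apply: funext => x; apply: eq_bigr => r _; rewrite mulrAC. Qed.

Lemma node_dot_chebsum_phi M N m j (L : seq (nat * R)) : (N + m <= M)%N ->
  all (fun p => p.1 < M)%N L ->
  node_dot M (chebsum L) (phi N m j) = \sum_(0 <= t < N) tau N m t j * coef_dot L (q_coefs N m t).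
Proof.
move=> NM LM; rewrite node_dot_sumr; apply: eq_big_nat => t /andP[_ tN].
by rewrite q_chebsum node_dot_chebsum // q_coefs_lt.
Qed.

Lemma sum_tau_coef_dot_low N m j a (w : R) : (a <= N - m)%N -> (a < N)%N ->
  \sum_(0 <= t < N) tau N m t j * coef_dot [:: (a, w)] (q_coefs N m t) = w * tau N m a j.
Proof.
move=> a_lo aN; rewrite -(@sum_nat_delta _ 0 N a (fun t => w * tau N m t j)) ?aN //.
apply: eq_big_nat => t /andP[_ tN]; have [<-|/eqP at_] := eqVneq a t.
  by rewrite /q_coefs; case_ifs; expand_coef_dot; ring.
by rewrite /q_coefs; case_ifs; expand_coef_dot; ring.
Qed.

Lemma sum_tau_coef_dot_low2 N m j a (w : R) b (w' : R) :
  (a <= N - m)%N -> (b <= N - m)%N -> (a < N)%N -> (b < N)%N ->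
  \sum_(0 <= t < N) tau N m t j * coef_dot [:: (a, w); (b, w')] (q_coefs N m t)
  = w * tau N m a j + w' * tau N m b j.
Proof.
move=> a_lo b_lo aN bN; rewrite -!sum_tau_coef_dot_low // -big_split /=.
by apply: eq_big_nat => t _; rewrite coef_dot_cat2 mulrDr.
Qed.

Lemma tau_sqr_nu N m r k l : (0 < m)%N -> (0 < N)%N ->
  tau N m r k * tau N m r l * nu N m r = pi / N%:R * (cheb r (node N k) * cheb r (node N l)) :> R.
Proof.
move=> m0 N0; have nu0 := @nu_gt0 R N m r m0.
have N0' : 0 < N%:R :> R by rewrite ltr0n.
have c2 : Num.sqrt (pi / (N%:R * nu N m r)) ^+ 2 = pi / (N%:R * nu N m r) :> R.
  by rewrite sqr_sqrtr // ltW // divr_gt0 ?pi_gt0 // mulr_gt0.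
rewrite /tau mulrACA -expr2 c2; move: nu0 N0' (pi_gt0 R).
by generalize (@nu R N m r) (@pi R) => a p a0 N0' p0; field; rewrite !gt_eqF.
Qed.

Lemma node_dot_phi M N m k l : (0 < m < N)%N -> (N + m <= M)%N -> (k < N)%N -> (l < N)%N ->
  node_dot M (phi N m k.+1) (phi N m l.+1) = (k == l)%:R :> R.
Proof.
move=> hm NM kN lN; have /andP[m0 mN] := hm.
rewrite node_dot_suml (eq_big_nat _ _ (F2 := fun r =>
  pi / N%:R * (cheb r (node N k.+1) * cheb r (node N l.+1)))); last first.
  move=> r /andP[_ rN]; rewrite q_chebsum node_dot_chebsum_phi ?q_coefs_lt //.
  rewrite (eq_big_nat _ _ (F2 := fun s => tau N m s l.+1 * nu N m r * (r == s)%:R)).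
    by rewrite sum_nat_delta // mulrA tau_sqr_nu //; lia.
  by move=> s /andP[_ sN]; rewrite coef_dot_q //; ring.
rewrite -mulr_sumr big_mkord cheb_discrete_orth_dual //.
have N0 : N%:R != 0 :> R by rewrite pnatr_eq0; lia.
by move: (pi_gt0 R); generalize (@pi R) => p p0; field; rewrite gt_eqF.
Qed.

Lemma node_dot_phi_phi3 n m k j : (0 < m < n)%N ->
  node_dot (4 * n) (phi n m k) (phi (3 * n) m j) = Aent n m k j :> R.
Proof.
move=> /andP[m0 mn]; rewrite node_dot_suml /Aent.
rewrite (big_cat_nat _ (n := (n - m + 1)%N)) /=; [|lia|lia].
congr (_ + _); apply: eq_big_nat => s /andP[s_lo s_hi];
  rewrite q_chebsum node_dot_chebsum_phi ?q_coefs_lt //; try lia; rewrite /q_coefs; case_ifs.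
  by rewrite sum_tau_coef_dot_low ?mul1r //; lia.
by rewrite sum_tau_coef_dot_low2; [ring|lia|lia|lia|lia].
Qed.

Lemma sum_tau_coef_dot_qt n m r j : (0 < m < n)%N -> (n <= r < 3 * n)%N ->
  \sum_(0 <= t < 3 * n) tau (3 * n) m t j * coef_dot (qt_coefs n m r) (q_coefs (3 * n) m t) =
  if (r < n + m)%N then
    mu n m r * tau (3 * n) m (2 * n - r) j + mu n m (2 * n - r) * tau (3 * n) m r j
  else if (r <= 3 * n - m)%N then tau (3 * n) m r j else nu (3 * n) m r * tau (3 * n) m r j :> R.
Proof.
move=> /andP[m0 mn] rn; rewrite /qt_coefs; case: ifP => r_lo.
  by rewrite sum_tau_coef_dot_low2 //; lia.
case: ifP => r_mid; first by rewrite sum_tau_coef_dot_low ?mul1r //; lia.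
rewrite (eq_big_nat _ _ (F2 := fun t => nu (3 * n) m r * tau (3 * n) m t j * (r == t)%:R)).
  by rewrite sum_nat_delta //; lia.
by move=> t /andP[_ tn]; rewrite coef_dot_q //; [ring|lia|lia].
Qed.

Lemma node_dot_phi3_psi n m (y : nat -> R) h j : (0 < m < n)%N ->
  node_dot (4 * n) (phi (3 * n) m j) (psi n m y h) = Bent n m y h j.
Proof.
move=> hm; have /andP[m0 mn] := hm.
rewrite psiE node_dot_sumr (eq_big_nat _ _ (F2 := fun r => sigma n y r h / Num.sqrt (v n m r) *
    \sum_(0 <= t < 3 * n) tau (3 * n) m t j * coef_dot (qt_coefs n m r) (q_coefs (3 * n) m t)))
  => [|r rn]; last by rewrite node_dotC qt_chebsum node_dot_chebsum_phi ?qt_coefs_lt //; lia.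
rewrite /Bent (big_cat_nat _ (n := (n + m)%N)) /=; [|lia|lia].
rewrite (big_cat_nat _ (n := (3 * n - m + 1)%N) (m := (n + m)%N)) /=; [|lia|lia].
rewrite addrA; congr (_ + _ + _); apply: eq_big_nat => r rn;
  rewrite sum_tau_coef_dot_qt //; try lia; case_ifs => //.
have v0 := @v_gt0 R n m r m0.
have s0 : Num.sqrt (v n m r) != 0 :> R by rewrite lt0r_neq0 ?sqrtr_gt0.
rewrite -v_nu3 //; last lia.
by set s := Num.sqrt _; rewrite -(sqr_sqrtr (ltW v0)) -/s; field.
Qed.

Lemma node_dot_psi_phi n m (y : nat -> R) h k : (0 < m < n)%N ->
  node_dot (4 * n) (psi n m y h) (phi n m k) = 0.
Proof.
move=> hm; have /andP[m0 mn] := hm.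
rewrite psiE node_dot_suml big1_seq // => r; rewrite mem_index_iota => rn.
rewrite qt_chebsum node_dot_chebsum_phi ?qt_coefs_lt //; last lia.
rewrite big1_seq ?mulr0 // => s; rewrite mem_index_iota => sn.
by rewrite coef_dotC coef_dot_q_qt ?mulr0.
Qed.

Lemma node_dot_psi n m (y : nat -> R) h l : (0 < m < n)%N ->
  node_dot (4 * n) (psi n m y h) (psi n m y l) =
  \sum_(n <= r < 3 * n) sigma n y r h * sigma n y r l.
Proof.
move=> hm; have /andP[m0 mn] := hm.
rewrite psiE node_dot_suml; apply: eq_big_nat => r rn; rewrite psiE node_dot_sumr.
rewrite (eq_big_nat _ _
  (F2 := fun s => sigma n y s l / Num.sqrt (v n m s) * v n m r * (r == s)%:R)); last first.
  by move=> s sn; rewrite !qt_chebsum node_dot_chebsum ?qt_coefs_lt // coef_dot_qt //; ring.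
have v0 := @v_gt0 R n m r m0.
have s0 : Num.sqrt (v n m r) != 0 :> R by rewrite lt0r_neq0 ?sqrtr_gt0.
rewrite sum_nat_delta //.
by set s := Num.sqrt _; rewrite -(sqr_sqrtr (ltW v0)) -/s; field.
Qed.

End WaveletInnerProducts.

Section SigmaOrthonormality.
Context {R : realType}.

(* [cc n y r k] only depends on [y k]. *)
Definition cc_at n r (x : R) : R := cc n (fun=> x) r 0.

Definition cc_coefs n r : seq (nat * R) :=
  if r == n then [:: (n, 1)]
  else if (r < 2 * n)%N then [:: (r, 1 / Num.sqrt 2); ((2 * n - r)%N, 1 / Num.sqrt 2)]
  else if r == (2 * n)%N then [:: ((2 * n)%N, 1 / Num.sqrt 3); (0%N, Num.sqrt 2 / Num.sqrt 3)]
  else [:: (r, Num.sqrt (3 / 2))].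

Lemma cc_at_chebsum n r : cc_at n r = chebsum (cc_coefs n r).
Proof.
apply: funext => x; rewrite /cc_at /cc /cc_coefs /chebsum.
by case: ifP => _; [|case: ifP => _; [|case: ifP => _]]; rewrite !big_cons big_nil /=; ring.
Qed.

Lemma cc_coefs_lt n r : (r < 3 * n)%N -> all (fun p => p.1 < 3 * n)%N (cc_coefs n r).
Proof. by move=> rn; rewrite /cc_coefs; case_ifs => /=; rewrite ?andbT; lia. Qed.

Lemma coef_dot_cc n r s : (0 < n)%N -> (n <= r < 3 * n)%N -> (n <= s < 3 * n)%N ->
  coef_dot (cc_coefs n r) (cc_coefs n s) = (r == s)%:R * (if (2 * n < r)%N then 3 / 2 else 1).
Proof.
move=> n0 rn sn.
have [<-|/eqP rs] := eqVneq r s; last first.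
  by rewrite /cc_coefs; case_ifs; expand_coef_dot; ring.
have sqrt_sqr (a : R) : 0 <= a -> Num.sqrt a * Num.sqrt a = a.
  by move=> a0; rewrite -expr2 sqr_sqrtr.
have s2 : Num.sqrt 2 != 0 :> R by rewrite lt0r_neq0 ?sqrtr_gt0.
have s3 : Num.sqrt 3 != 0 :> R by rewrite lt0r_neq0 ?sqrtr_gt0.
by rewrite /cc_coefs; case_ifs; expand_coef_dot; rewrite ?mulf_div ?sqrt_sqr ?ler0n //; field.
Qed.

Lemma cc_at_coarse_node n r k : (n <= r < 3 * n)%N -> (k < n)%N ->
  cc_at n r (node n k.+1) =
  if (2 * n < r)%N then - (Num.sqrt (3 / 2) * cheb (r - 2 * n) (node n k.+1)) else 0.
Proof.
move=> rn kn; rewrite /cc_at /cc.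
have [->|r_n] := eqVneq r n.
  by rewrite /= cheb_coarse_node_mid // ifF //; apply/negbTE; lia.
case: ifP => r_lo.
  have d_lt : (r - n < n)%N by lia.
  have := cheb_coarse_node_add_sub kn _ d_lt.
  have -> : (n + (r - n) = r)%N by lia.
  have -> : (n - (r - n) = 2 * n - r)%N by lia.
  by move=> ->; rewrite mul0r ifF //; apply/negbTE; lia.
have [->|r_2n] := eqVneq r (2 * n)%N.
  by rewrite /= cheb_coarse_node_double // addNr mul0r ltnn.
have r_hi : (2 * n < r)%N by lia.
have d0 : (0 < r - 2 * n)%N by lia.
by rewrite r_hi -mulrN -cheb_coarse_node_shift // subnKC // ltnW.
Qed.

Lemma sum_coarse_cc_at n r s : (n <= r < 3 * n)%N -> (n <= s < 3 * n)%N ->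
  pi / (3 * n)%N%:R * \sum_(k < n) cc_at n r (node n k.+1) * cc_at n s (node n k.+1)
  = (r == s)%:R * (if (2 * n < r)%N then 1 / 2 else 0).
Proof.
move=> rn sn; have n0 : n%:R != 0 :> R by rewrite pnatr_eq0; lia.
have s32 : Num.sqrt (3 / 2) ^+ 2 = 3 / 2 :> R by rewrite sqr_sqrtr ?divr_ge0 ?ler0n.
have [r_hi|r_lo] := ltnP (2 * n) r; last first.
  by rewrite big1 ?mulr0 // => k _; rewrite cc_at_coarse_node // ifF ?mul0r //; lia.
have [s_hi|s_lo] := ltnP (2 * n) s; last first.
  rewrite big1 ?mulr0 => [|k _].
    by rewrite (_ : (r == s) = false) ?mul0r //; apply/eqP; lia.
  by rewrite [cc_at n s _]cc_at_coarse_node // ifF ?mulr0 //; lia.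
rewrite (eq_bigr (fun k : 'I_n => 3 / 2 *
  (cheb (r - 2 * n) (node n k.+1) * cheb (s - 2 * n) (node n k.+1)))) => [|k _]; last first.
  by rewrite !cc_at_coarse_node // !ifT // mulrNN mulrACA -expr2 s32.
rewrite -mulr_sumr cheb_discrete_orth; [|lia|lia].
rewrite (_ : (r - 2 * n == s - 2 * n)%N = (r == s)); last by apply/eqP/eqP; lia.
rewrite natrM; move: (pi_gt0 R); generalize (@pi R) => p p0.
by field; rewrite n0 gt_eqF.
Qed.

Lemma sum_sigma n (y : nat -> R) r s : (0 < n)%N -> Yenum n y ->
  (n <= r < 3 * n)%N -> (n <= s < 3 * n)%N ->
  \sum_(h < 2 * n) sigma n y r h.+1 * sigma n y s h.+1 = (r == s)%:R.
Proof.
move=> n0 yY rn sn.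
have c2 : Num.sqrt (pi / (3 * n)%N%:R) ^+ 2 = pi / (3 * n)%N%:R :> R.
  by rewrite sqr_sqrtr // divr_ge0 ?pi_ge0 ?ler0n.
rewrite (eq_bigr (fun h : 'I_(2 * n) => pi / (3 * n)%N%:R *
  (cc_at n r (y h.+1) * cc_at n s (y h.+1)))) => [|h _]; last by rewrite /sigma mulrACA -expr2 c2.
rewrite -mulr_sumr (sum_Yenum n0 y (fun x => cc_at n r x * cc_at n s x)) //.
rewrite mulrBr sum_coarse_cc_at //.
rewrite -[_ * \sum_(k < 3 * n) _]/(node_dot (3 * n) (cc_at n r) (cc_at n s)).
have r3 : (r < 3 * n)%N by lia.
have s3 : (s < 3 * n)%N by lia.
rewrite !cc_at_chebsum node_dot_chebsum ?cc_coefs_lt //.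
rewrite coef_dot_cc // -mulrBr; case: ifP => _; last by rewrite subr0 mulr1.
by rewrite (_ : 3 / 2 - 1 / 2 = 1 :> R) ?mulr1 //; field.
Qed.

Lemma sum_sigma_dual n (y : nat -> R) h l : (0 < n)%N -> Yenum n y ->
  (h < 2 * n)%N -> (l < 2 * n)%N ->
  \sum_(n <= r < 3 * n) sigma n y r h.+1 * sigma n y r l.+1 = (h == l)%:R.
Proof.
move=> n0 yY hn ln.
pose F (i j : 'I_(2 * n)) := sigma n y (n + i)%N j.+1.
have rows i j : \sum_t F i t * F j t = (i == j)%:R.
  rewrite sum_sigma ?eqn_add2l //; [have := ltn_ord i|have := ltn_ord j]; lia.
have := orthonormal_rows_cols rows (Ordinal hn) (Ordinal ln) => /= <-.
rewrite -{1}(add0n n) big_addn (_ : (3 * n - n = 2 * n)%N) ?big_mkord; last lia.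
by apply: eq_bigr => i _; rewrite addnC.
Qed.

End SigmaOrthonormality.

Theorem theorem4 (R : realType) (n m : nat) (y : nat -> R)
    (fn gn f3n : R -> R)
    (an : 'cV[R]_n) (bn : 'cV[R]_(2 * n)) (a3n : 'cV[R]_(3 * n)) :
  (0 < m < n)%N ->
  Yenum n y ->
  (forall x, -1 <= x <= 1 ->
     fn x = \sum_(k < n) an k ord0 * phi n m k.+1 x) ->
  (forall x, -1 <= x <= 1 ->
     gn x = \sum_(h < 2 * n) bn h ord0 * psi n m y h.+1 x) ->
  (forall x, -1 <= x <= 1 ->
     f3n x = \sum_(j < 3 * n) a3n j ord0 * phi (3 * n) m j.+1 x) ->
  (forall x, -1 <= x <= 1 -> f3n x = fn x + gn x) ->
  an = Amat n m *m a3n /\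
  bn = Bmat n m y *m a3n /\
  a3n = (Amat n m)^T *m an + (Bmat n m y)^T *m bn.
Proof.
move=> hm yY fn_exp gn_exp f3n_exp f3n_split; have /andP[m0 mn] := hm.
have phi_n_orth (k l : 'I_n) : node_dot (4 * n) (phi n m k.+1) (phi n m l.+1) = (k == l)%:R :> R.
  by apply: node_dot_phi; rewrite ?ltn_ord //; lia.
have phi_3n_orth (j l : 'I_(3 * n)) :
    node_dot (4 * n) (phi (3 * n) m j.+1) (phi (3 * n) m l.+1) = (j == l)%:R :> R.
  by apply: node_dot_phi; rewrite ?ltn_ord //; lia.
have psi_orth (h l : 'I_(2 * n)) :
    node_dot (4 * n) (psi n m y h.+1) (psi n m y l.+1) = (h == l)%:R.
  by rewrite node_dot_psi // sum_sigma_dual //; lia.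
have dot_split G : node_dot (4 * n) G f3n = node_dot (4 * n) G fn + node_dot (4 * n) G gn.
  by rewrite (node_dot_eq_on f3n_split) node_dotDr.
have phi_gn k : node_dot (4 * n) (phi n m k) gn = 0.
  rewrite (node_dot_expansion gn_exp) big1 // => h _.
  by rewrite node_dotC node_dot_psi_phi // mulr0.
have psi_fn h : node_dot (4 * n) (psi n m y h) fn = 0.
  by rewrite (node_dot_expansion fn_exp) big1 // => k _; rewrite node_dot_psi_phi // mulr0.
split; [|split]; apply/matrixP => i z; rewrite (ord1 z) !mxE.
- have := dot_split (phi n m i.+1).
  rewrite phi_gn addr0 (node_dot_orthonormal_coef i phi_n_orth fn_exp).
  rewrite (node_dot_expansion f3n_exp) => <-.
  by apply: eq_bigr => j _; rewrite mxE node_dot_phi_phi3 // mulrC.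
- have := dot_split (psi n m y i.+1).
  rewrite psi_fn add0r (node_dot_orthonormal_coef i psi_orth gn_exp).
  rewrite (node_dot_expansion f3n_exp) => <-.
  by apply: eq_bigr => j _; rewrite mxE node_dotC node_dot_phi3_psi // mulrC.
- rewrite -(node_dot_orthonormal_coef i phi_3n_orth f3n_exp) dot_split.
  rewrite (node_dot_expansion fn_exp) (node_dot_expansion gn_exp).
  congr (_ + _); apply: eq_bigr => k _; rewrite !mxE mulrC.
    by rewrite node_dotC node_dot_phi_phi3.
  by rewrite node_dot_phi3_psi.
Qed.
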